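(* Let $U$ be a Hilbert space, $T: U\rightrightarrows U$, $(\hat u,\hat w)\in\operatorname{graph}T$, and $P,N,M\in\mathcal{L}(U;U)$ with $M\ge0$ and $M\ge P$. Let $\alpha>0$, and if $\alpha\in(0,1)$ suppose $(M,M-P)\in\mathcal{P}(T^{-1}(\hat w),\hat u)$. Then $T$ is $(P,N,M)$-partially subregular at $(\hat u,\hat w)$ if it is $(\alpha P,\alpha N,M)$-partially subregular there. Conversely, if $(M,M-\alpha P)\in\mathcal{P}(T^{-1}(\hat w),\hat u)$ in case $\alpha>1$, then $T$ is $(\alpha P,\alpha N,M)$-partially subregular at $(\hat u,\hat w)$ if it is $(P,N,M)$-partially subregular there. In particular, if $(M,M-\max\{\alpha,1\}P)\in\mathcal{P}(T^{-1}(\hat w),\hat u)$, the two properties are equivalent.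
   Context: For $T\in\mathcal{L}(U;U)$ (not necessarily positive): $\|x\|^2_T:=\langle Tx,x\rangle$, $\operatorname{dist}^2_T(z,A):=\inf_{u\in A}\|z-u\|^2_T$ ($\inf\emptyset=+\infty$); $T\ge S$ means $T-S$ positive semidefinite. For $M,P,N\in\mathcal{L}(U;U)$ with $N\ge0$, $M\ge0$, $M\ge P$, $T$ is $(P,N,M)$-partially subregular at $(\hat u,\hat w)$ if there is a neighbourhood $\mathcal{U}\ni\hat u$ with $\operatorname{dist}^2_N(\hat w,T(u)) + \operatorname{dist}^2_{M-P}(u,T^{-1}(\hat w))\ge\operatorname{dist}^2_M(u,T^{-1}(\hat w))$ for all $u\in\mathcal{U}$. For $M,M'\in\mathcal{L}(U;U)$, $A\subset U$, $\hat u\in A$: $(M,M')\in\mathcal{P}(A,\hat u)$ means there is a neighbourhood $\mathcal{U}'\ni\hat u$ such that each $u\in\mathcal{U}'$ has a common projection onto $A$ with respect to $\|\cdot\|_M$ and $\|\cdot\|_{M'}$ (a point of $A$ minimising both $\|u-\cdot\|_M$ and $\|u-\cdot\|_{M'}$ over $A$). *)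

From mathcomp Require Import all_boot all_order all_algebra.
From mathcomp Require Import all_classical all_reals all_analysis.
Set Implicit Arguments. Unset Strict Implicit. Unset Printing Implicit Defensive.
Import Order.TTheory GRing.Theory Num.Theory.
Import numFieldNormedType.Exports.
Local Open Scope classical_set_scope.
Local Open Scope ring_scope.

Section Defs.
Context {R : realType} {U : normedModType R}.

(* ip is a (real) inner product inducing the norm of U; together with
   completeness of U this makes U a real Hilbert space. *)
Definition is_inner_product (ip : U -> U -> R) : Prop :=
  [/\ (forall x y, ip x y = ip y x),
      (forall (a : R) x y z, ip (a *: x + y) z = a * ip x z + ip y z) &
      (forall x, ip x x = `|x| ^+ 2)].

Definition bounded_linear (T : U -> U) : Prop := linear T /\ continuous T.

Definition qform (ip : U -> U -> R) (T : U -> U) (x : U) : R := ip (T x) x.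

(* dist_T^2(z, A) := inf_{u in A} ||z - u||_T^2, with inf of the empty set = +oo *)
Definition dist2 (ip : U -> U -> R) (T : U -> U) (z : U) (A : set U) : \bar R :=
  ereal_inf [set (qform ip T (z - u))%:E | u in A].

Definition psd (ip : U -> U -> R) (T : U -> U) : Prop := forall x, 0 <= qform ip T x.

Definition op_ge (ip : U -> U -> R) (T S : U -> U) : Prop := psd ip (fun x => T x - S x).

Definition op_sub (T S : U -> U) : U -> U := fun x => T x - S x.
Definition op_scale (a : R) (T : U -> U) : U -> U := fun x => a *: T x.

Definition inv_img (T : U -> set U) (w : U) : set U := [set u | T u w].

Definition partially_subregular (ip : U -> U -> R) (T : U -> set U)
    (P N M : U -> U) (uh wh : U) : Prop :=
  exists2 V : set U, nbhs uh V & forall u, V u ->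
    (dist2 ip N wh (T u) + dist2 ip (op_sub M P) u (inv_img T wh)
       >= dist2 ip M u (inv_img T wh))%E.

Definition common_proj (ip : U -> U -> R) (M M' : U -> U) (A : set U) (uh : U) : Prop :=
  exists2 V : set U, nbhs uh V & forall u, V u ->
    exists2 a, A a & forall a', A a' ->
      qform ip M (u - a) <= qform ip M (u - a') /\
      qform ip M' (u - a) <= qform ip M' (u - a').

End Defs.

From mathcomp Require Import all_boot all_order all_algebra.
From mathcomp Require Import all_classical all_reals all_analysis.
From mathcomp Require Import lra.
Import Order.TTheory GRing.Theory Num.Theory.
Import numFieldNormedType.Exports.
Local Open Scope classical_set_scope.
Local Open Scope ring_scope.
Set Implicit Arguments. Unset Strict Implicit. Unset Printing Implicit Defensive.

(* Fix u near uh and write S = T^{-1}(wh), m s = ||u - s||_M^2, p s = ||u - s||_P^2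
   and a = dist_N^2(wh, T u).  The (tP, tN, M) inequality at u reads
   inf m <= t a + inf (m - t p); with c = inf m it says (c - m s) / t <= a - p s
   for every s in S.  As c - m s <= 0, the left-hand side increases with t, so the
   inequality passes from a larger t' to a smaller t, provided m - t p >= 0 (true
   for t <= 1 since M >= P) keeps the infimum away from -oo.  If instead some s0
   minimises both m and m - t p, the inequality for any t' > 0 evaluated at s0
   gives p s0 <= a, and this alone yields the inequality for t. *)

Section SubregularityInequality.
Variables (R : realType) (X : Type) (S : set X) (m p : X -> R) (a : \bar R).
Local Notation inf f := (ereal_inf [set (f s)%:E | s in S]).

Definition subreg_ineq (t : R) := (inf m <= t%:E * a + inf (fun s => m s - t * p s))%E.

Lemma ereal_inf_image_le (f : X -> R) s : S s -> (inf f <= (f s)%:E)%E.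
Proof. by move=> Ss; apply: ereal_inf_lbound; exists s. Qed.

Lemma ereal_inf_image_ge (f : X -> R) b :
  (forall s, S s -> b <= f s) -> (b%:E <= inf f)%E.
Proof. by move=> fb; apply: le_ereal_inf_tmp => _ [s Ss <-]; rewrite lee_fin fb. Qed.

Lemma ereal_inf_image_fin s0 : S s0 -> (forall s, S s -> 0 <= m s) ->
  exists2 c, inf m = c%:E & forall s, S s -> c <= m s.
Proof.
move=> Ss0 /ereal_inf_image_ge inf_ge0; have := ereal_inf_image_le m Ss0.
case E: (inf m) inf_ge0 => [c| |] // _ _; exists c => // s Ss.
by rewrite -lee_fin -E ereal_inf_image_le.
Qed.

Lemma subreg_ineq_pinfty t b : 0 < t -> a = +oo%E ->
  (forall s, S s -> b <= m s - t * p s) -> subreg_ineq t.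
Proof.
rewrite /subreg_ineq => t0 -> /ereal_inf_image_ge infb.
rewrite gt0_muley ?lte_fin // addye ?leey //.
by rewrite gt_eqF // (lt_le_trans (ltNyr b)).
Qed.

Lemma subreg_ineq_fin t c r : a = r%:E -> inf m = c%:E ->
  subreg_ineq t <-> (forall s, S s -> c <= t * r + (m s - t * p s)).
Proof.
rewrite /subreg_ineq => -> infc; rewrite infc -EFinM; split=> [ineq s Ss | ineq].
  by rewrite -lee_fin EFinD (le_trans ineq) // leeD2l // ereal_inf_image_le.
rewrite -leeBlDl // -EFinB; apply: ereal_inf_image_ge => s /ineq; lra.
Qed.

Lemma subreg_ineq_ninfty t c : 0 < t -> a = -oo%E -> inf m = c%:E -> ~ subreg_ineq t.
Proof. by rewrite /subreg_ineq => t0 -> ->; rewrite gt0_muleNy ?lte_fin // addNye leeNy_eq. Qed.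

Lemma subreg_ineq_antitone t t' s0 : S s0 -> (forall s, S s -> 0 <= m s) ->
  (forall s, S s -> 0 <= m s - t * p s) -> 0 < t <= t' ->
  subreg_ineq t' -> subreg_ineq t.
Proof.
move=> Ss0 m_ge0 mtp_ge0 /andP[t_gt0 le_tt'] ineq.
have [c infc c_le] := ereal_inf_image_fin Ss0 m_ge0.
case Ea: a => [r||].
- move/(subreg_ineq_fin _ Ea infc): ineq => ineq.
  apply/(subreg_ineq_fin _ Ea infc) => s Ss.
  have := ineq s Ss; have := c_le s Ss; nra.
- exact: subreg_ineq_pinfty t_gt0 Ea mtp_ge0.
- by have := subreg_ineq_ninfty (lt_le_trans t_gt0 le_tt') Ea infc.
Qed.

Lemma subreg_ineq_common_min t t' s0 : 0 < t -> 0 < t' -> S s0 ->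
  (forall s, S s -> m s0 <= m s /\ m s0 - t * p s0 <= m s - t * p s) ->
  subreg_ineq t' -> subreg_ineq t.
Proof.
move=> t_gt0 t'_gt0 Ss0 min ineq.
have infc : inf m = (m s0)%:E.
  apply/eqP; rewrite eq_le ereal_inf_image_le //.
  by apply: ereal_inf_image_ge => s /min[].
case Ea: a => [r||].
- move/(subreg_ineq_fin _ Ea infc): ineq => ineq.
  apply/(subreg_ineq_fin _ Ea infc).
  have le_p_r : p s0 <= r.
    have ineq0 := ineq s0 Ss0.
    by rewrite -subr_ge0 -(pmulr_rge0 _ t'_gt0) mulrBr; lra.
  move=> s /min[_]; nra.
- by apply: (subreg_ineq_pinfty (b := m s0 - t * p s0) t_gt0 Ea) => s /min[].
- by have := subreg_ineq_ninfty t'_gt0 Ea infc.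
Qed.

End SubregularityInequality.

Section PartialSubregularity.
Variables (R : realType) (U : normedModType R) (ip : U -> U -> R).
Hypothesis ip_inner : is_inner_product ip.

Lemma op_scale1 (Q : U -> U) : op_scale 1 Q = Q.
Proof. by apply: funext => x; rewrite /op_scale scale1r. Qed.

Lemma ip0l z : ip 0 z = 0.
Proof.
case: ip_inner => _ ipDl _; have := ipDl 1 0 0 z.
by rewrite scaler0 addr0 mul1r; lra.
Qed.

Lemma qformZ a (Q : U -> U) x : qform ip (op_scale a Q) x = a * qform ip Q x.
Proof.
case: ip_inner => _ ipDl _.
by rewrite /qform /op_scale -[a *: Q x]addr0 ipDl ip0l addr0.
Qed.

Lemma qformB (Q Q' : U -> U) x :
  qform ip (op_sub Q Q') x = qform ip Q x - qform ip Q' x.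
Proof.
case: ip_inner => _ ipDl _.
by rewrite /qform /op_sub addrC -scaleN1r ipDl mulN1r addrC.
Qed.

Lemma dist2Z a (Q : U -> U) z (A : set U) : 0 < a ->
  dist2 ip (op_scale a Q) z A = (a%:E * dist2 ip Q z A)%E.
Proof.
move=> a_gt0; rewrite /dist2 -ereal_inf_pZl // image_comp.
by congr ereal_inf; apply: eq_imagel => s _ /=; rewrite qformZ EFinM.
Qed.

Lemma op_ge_scale (M P : U -> U) t : psd ip M -> op_ge ip M P -> 0 <= t <= 1 ->
  op_ge ip M (op_scale t P).
Proof.
move=> psdM geMP /andP[t_ge0 t_le1] x; have := geMP x.
rewrite /op_ge /psd -/(op_sub M P) -/(op_sub M (op_scale t P)) !qformB qformZ.
have := psdM x; nra.
Qed.

Variables (T : U -> set U) (uh wh : U) (P N M : U -> U).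
Local Notation S := (inv_img T wh).
Local Notation subreg_at u :=
  (subreg_ineq S (fun s => qform ip M (u - s)) (fun s => qform ip P (u - s))
     (dist2 ip N wh (T u))).

Lemma nbhs_exists2E (Q : U -> Prop) :
  (exists2 V : set U, nbhs uh V & forall u, V u -> Q u) <-> \forall u \near uh, Q u.
Proof. by split=> [[V nV VQ] | nQ]; [exact: filterS VQ nV | exists Q]. Qed.

Lemma partially_subregular_scaleE t : 0 < t ->
  partially_subregular ip T (op_scale t P) (op_scale t N) M uh wh <->
  \forall u \near uh, subreg_at u t.
Proof.
move=> t_gt0; rewrite /partially_subregular -nbhs_exists2E.
suff distE u : dist2 ip (op_sub M (op_scale t P)) u S =
    ereal_inf [set (qform ip M (u - s) - t * qform ip P (u - s))%:E | s in S].
  by split=> [] [V nV VQ]; exists V => // u /VQ; rewrite dist2Z // distE.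
by congr ereal_inf; apply: eq_imagel => s _; rewrite qformB qformZ.
Qed.

Lemma common_proj_scale_minimizers t : common_proj ip M (op_sub M (op_scale t P)) S uh ->
  \forall u \near uh, exists2 s0, S s0 & forall s, S s ->
    qform ip M (u - s0) <= qform ip M (u - s) /\
    qform ip M (u - s0) - t * qform ip P (u - s0) <=
      qform ip M (u - s) - t * qform ip P (u - s).
Proof.
rewrite /common_proj -nbhs_exists2E => -[V nV VQ]; exists V => // u /VQ[s0 Ss0 min].
by exists s0 => // s /min; rewrite !qformB !qformZ.
Qed.

Lemma partially_subregular_scale t t' : T uh wh -> psd ip M -> op_ge ip M P ->
  0 < t -> 0 < t' ->
  (t <= t' /\ t <= 1) \/ common_proj ip M (op_sub M (op_scale t P)) S uh ->
  partially_subregular ip T (op_scale t' P) (op_scale t' N) M uh wh ->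
  partially_subregular ip T (op_scale t P) (op_scale t N) M uh wh.
Proof.
move=> Tuh psdM geMP t_gt0 t'_gt0 hyp.
rewrite !partially_subregular_scaleE //.
case: hyp => [[le_tt' le_t1] | /common_proj_scale_minimizers cp] ineq'.
- move: ineq'; apply: filterS => u; apply: (subreg_ineq_antitone (s0 := uh)) => //.
  + have geMtP : op_ge ip M (op_scale t P) by apply: (op_ge_scale psdM geMP); rewrite ltW.
    by move=> s _; move: (geMtP (u - s)); rewrite -/(op_sub M _) qformB qformZ.
  + by rewrite t_gt0.
- move: cp ineq'; apply: filterS2 => u [s0 Ss0 min].
  exact: (subreg_ineq_common_min t_gt0 t'_gt0 Ss0 min).
Qed.

End PartialSubregularity.

Theorem lemma4p7 (R : realType) (U : completeNormedModType R)
  (ip : U -> U -> R) (T : U -> set U) (uh wh : U) (P N M : U -> U) (alpha : R) :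
  is_inner_product ip ->
  T uh wh ->
  bounded_linear P -> bounded_linear N -> bounded_linear M ->
  psd ip N -> psd ip M -> op_ge ip M P ->
  0 < alpha ->
  [/\ ((alpha < 1 -> common_proj ip M (op_sub M P) (inv_img T wh) uh) ->
        partially_subregular ip T (op_scale alpha P) (op_scale alpha N) M uh wh ->
        partially_subregular ip T P N M uh wh),
      ((1 < alpha -> common_proj ip M (op_sub M (op_scale alpha P)) (inv_img T wh) uh) ->
        partially_subregular ip T P N M uh wh ->
        partially_subregular ip T (op_scale alpha P) (op_scale alpha N) M uh wh) &
      (common_proj ip M (op_sub M (op_scale (Num.max alpha 1) P)) (inv_img T wh) uh ->
        (partially_subregular ip T P N M uh wh <->
         partially_subregular ip T (op_scale alpha P) (op_scale alpha N) M uh wh))].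
Proof.
move=> ip_inner Tuh _ _ _ _ psdM geMP alpha_gt0.
have to_unscaled := partially_subregular_scale (N := N) ip_inner Tuh psdM geMP ltr01 alpha_gt0.
have to_scaled := partially_subregular_scale (N := N) ip_inner Tuh psdM geMP alpha_gt0 ltr01.
rewrite !op_scale1 in to_unscaled to_scaled.
split=> [cp | cp | cp]; [apply: to_unscaled | apply: to_scaled | split].
- by have [/cp | ?] := ltP alpha 1; [right | left].
- by have [? | /cp] := leP alpha 1; [left | right].
- apply: to_scaled; have [? | lt1alpha] := leP alpha 1; first by left.
  by right; rewrite -(max_l (ltW lt1alpha)).
- apply: to_unscaled; have [? | ltalpha1] := leP 1 alpha; first by left.
  by right; rewrite -(op_scale1 P) -(max_r (ltW ltalpha1)).
Qed.
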